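(* Let $M$ be a finite set of alternatives, $\mathcal{R}$ the set of weak preference orders on $M$, and $\varphi:\mathcal{R}\to\Delta(M)$ a mechanism. If $\varphi$ is separation monotonic, separation upper invariant, and separation lower invariant, then it is separation strategyproof, i.e., for every separation $(R,R')$, $\varphi(R)$ first order-stochastically dominates $\varphi(R')$ at $R$, and $\varphi(R')$ first order-stochastically dominates $\varphi(R)$ at $R'$.
   Context: A preference order is a complete, transitive relation $R$ on $M$; $a\,I\,b$ means $a\,R\,b$ and $b\,R\,a$; $a\,P\,b$ means $a\,R\,b$ and not $b\,R\,a$. Write $R$ as $M_1\,P\,\cdots\,P\,M_K$ where $(M_k)$ are the nonempty indifference classes ordered so that $a\,P\,b$ for $a\in M_k$, $b\in M_{k'}$, $k<k'$. For $A\subseteq M$, $\varphi_A(R)=\sum_{a\in A}(\varphi(R))_a$. A lottery $x$ first order-stochastically dominates $y$ at $R$ if $\sum_{j: j R a}x_j\ge\sum_{j: j R a}y_j$ for all $a\in M$. A separation is a pair $(R,R')$ such that, with $R=M_1\,P\,\cdots\,P\,M_K$, there are $\kappa\in\{1,\dots,K\}$ and a partition of $M_\kappa$ into disjoint nonempty $M_\kappa^1,M_\kappa^2$ with $R'=M_1\,P'\,\cdots\,P'\,M_{\kappa-1}\,P'\,M_\kappa^1\,P'\,M_\kappa^2\,P'\,M_{\kappa+1}\,P'\,\cdots\,P'\,M_K$ (indifference within each listed set). Axioms, for every separation $(R,R')$: separation responsive: $\varphi_{M_\kappa^1}(R')\ge\varphi_{M_\kappa^1}(R)$ and $\varphi_{M_\kappa^2}(R')\le\varphi_{M_\kappa^2}(R)$;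 separation direct: if $\varphi_{M_k}(R)\ne\varphi_{M_k}(R')$ for some $k\in\{1,\dots,K\}$ then $\varphi_{M_\kappa^1}(R')\ne\varphi_{M_\kappa^1}(R)$ and $\varphi_{M_\kappa^2}(R')\ne\varphi_{M_\kappa^2}(R)$; separation monotonic: responsive and direct; separation upper invariant: $\varphi_{M_k}(R)=\varphi_{M_k}(R')$ for $k<\kappa$; separation lower invariant: $\varphi_{M_k}(R)=\varphi_{M_k}(R')$ for $k>\kappa$. *)

From HB Require Import structures.
From mathcomp Require Import all_boot all_order all_algebra.
Set Implicit Arguments. Unset Strict Implicit. Unset Printing Implicit Defensive.
Import Order.TTheory GRing.Theory Num.Theory.
Local Open Scope ring_scope.

Section Defs.
Variable M : finType.
Variable R : realFieldType.

(* a weak preference order: complete and transitive relation; [p a b] means a R b *)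
Definition weak_order (p : rel M) : Prop := total p /\ transitive p.

Definition is_lottery (x : {ffun M -> R}) : Prop :=
  (forall a, 0 <= x a) /\ \sum_(a : M) x a = 1.

Definition mass (x : {ffun M -> R}) (A : {set M}) : R := \sum_(a in A) x a.

Definition icl (p : rel M) (a : M) : {set M} := [set b | p a b && p b a].

(* (p, q) is a separation splitting the indifference class C of p into C1 (above) and C2 *)
Definition separation (p q : rel M) (C C1 C2 : {set M}) : Prop :=
  weak_order p /\
  (exists c, C = icl p c) /\
  C1 :|: C2 = C /\ C1 :&: C2 = set0 /\ C1 != set0 /\ C2 != set0 /\
  (forall a b, q a b = if (a \in C) && (b \in C) then (a \in C1) || (b \in C2)
                          else p a b).

Definition strict (p : rel M) (a b : M) : bool := p a b && ~~ p b a.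

Definition sep_responsive (phi : rel M -> {ffun M -> R}) : Prop :=
  forall p q C C1 C2, separation p q C C1 C2 ->
    mass (phi q) C1 >= mass (phi p) C1 /\ mass (phi q) C2 <= mass (phi p) C2.

Definition sep_direct (phi : rel M -> {ffun M -> R}) : Prop :=
  forall p q C C1 C2, separation p q C C1 C2 ->
    (exists a, mass (phi p) (icl p a) != mass (phi q) (icl p a)) ->
    mass (phi q) C1 != mass (phi p) C1 /\ mass (phi q) C2 != mass (phi p) C2.

Definition sep_monotonic phi := sep_responsive phi /\ sep_direct phi.

(* classes M_k with k < kappa: classes strictly above C *)
Definition sep_upper_invariant (phi : rel M -> {ffun M -> R}) : Prop :=
  forall p q C C1 C2, separation p q C C1 C2 ->
    forall a c, c \in C -> strict p a c ->
      mass (phi p) (icl p a) = mass (phi q) (icl p a).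

(* classes M_k with k > kappa: classes strictly below C *)
Definition sep_lower_invariant (phi : rel M -> {ffun M -> R}) : Prop :=
  forall p q C C1 C2, separation p q C C1 C2 ->
    forall a c, c \in C -> strict p c a ->
      mass (phi p) (icl p a) = mass (phi q) (icl p a).

Definition fosd (p : rel M) (x y : {ffun M -> R}) : Prop :=
  forall a, \sum_(j | p j a) x j >= \sum_(j | p j a) y j.

Definition sep_strategyproof (phi : rel M -> {ffun M -> R}) : Prop :=
  forall p q C C1 C2, separation p q C C1 C2 ->
    fosd p (phi p) (phi q) /\ fosd q (phi q) (phi p).

End Defs.

From mathcomp Require Import all_boot all_order all_algebra.
Set Implicit Arguments. Unset Strict Implicit. Unset Printing Implicit Defensive.
Import Order.TTheory GRing.Theory Num.Theory.
Local Open Scope ring_scope.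

(* For [p], an upper contour set either consists of classes strictly above the
   split class [C], or its complement consists of classes strictly below [C];
   by upper or lower invariance (and total mass 1) both lotteries give it the
   same mass.  For [q], the upper contour set of an element of the upper part
   [C1] is the union of the classes above [C] with [C1], and responsiveness
   raises the mass of [C1]; all other upper contour sets of [q] are upper
   contour sets of [p]. *)

Section Mass.
Variables (M : finType) (R : realFieldType).
Implicit Types (x y : {ffun M -> R}) (S : {set M}).

Lemma mass_setC x S : mass x (~: S) = \sum_a x a - mass x S.
Proof.
rewrite (bigID (mem S)) /= addrC addrK.
by apply: eq_bigl => a; rewrite inE.
Qed.

Lemma mass_setU x S1 S2 :
  [disjoint S1 & S2] -> mass x (S1 :|: S2) = mass x S1 + mass x S2.
Proof.
by move=> dis; rewrite /mass -bigU //; apply: eq_bigl => a; rewrite inE.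
Qed.

Lemma fosdE (p : rel M) x y :
  fosd p x y <-> forall a, mass y [set j | p j a] <= mass x [set j | p j a].
Proof. by rewrite /fosd /mass; split=> le a; move: (le a); rewrite !big_set. Qed.

End Mass.

Section WeakOrder.
Variables (M : finType) (p : rel M).
Hypothesis wp : weak_order p.

Lemma weak_order_refl a : p a a.
Proof. by have [tot _] := wp; have := tot a a; rewrite orbb. Qed.

Lemma weak_order_strict_trans a b d : p a b -> strict p b d -> strict p a d.
Proof.
have [_ tr] := wp; move=> pab /andP[pbd npdb]; rewrite /strict (tr _ _ _ pab pbd).
by apply: contra npdb => pda; apply: tr pda pab.
Qed.

Lemma weak_order_strictN a b : ~~ p a b -> strict p b a.
Proof.
have [tot _] := wp; move=> npab; rewrite /strict npab andbT.
by case/orP: (tot a b) npab => ->.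
Qed.

Lemma icl_refl a : a \in icl p a.
Proof. by rewrite inE weak_order_refl. Qed.

Lemma icl_eq a b : b \in icl p a -> icl p b = icl p a.
Proof.
have [_ tr] := wp; rewrite inE => /andP[pab pba]; apply/setP => t; rewrite !inE.
apply/andP/andP => [[pbt ptb]|[pat pta]]; split.
- exact: tr pab pbt.
- exact: tr ptb pba.
- exact: tr pba pat.
- exact: tr pta pab.
Qed.

Lemma mass_eq_icl_closed (R : realFieldType) (x y : {ffun M -> R}) (S : {set M}) :
  (forall s, s \in S -> icl p s \subset S) ->
  (forall s, s \in S -> mass x (icl p s) = mass y (icl p s)) ->
  mass x S = mass y S.
Proof.
move=> closedS eqS; rewrite /mass !(partition_big_imset (icl p)) /=.
apply: eq_bigr => _ /imsetP[s sS ->].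
have inS t : (t \in S) && (icl p t == icl p s) = (t \in icl p s).
  apply/andP/idP => [[_ /eqP <-]|ts]; first exact: icl_refl.
  by rewrite (subsetP (closedS s sS)) // (icl_eq ts) eqxx.
by rewrite !(eq_bigl _ _ inS); apply: eqS.
Qed.

End WeakOrder.

Section Separation.
Variables (M : finType) (p q : rel M) (C C1 C2 : {set M}).
Hypothesis sep : separation p q C C1 C2.

Lemma separation_partition : C1 :|: C2 = C /\ [disjoint C1 & C2].
Proof.
by have [_ [_ [UC [IC _]]]] := sep; rewrite -setI_eq0 IC.
Qed.

Lemma separation_class c : c \in C -> C = icl p c.
Proof. by have [wp [[c' ->] _]] := sep => /(icl_eq wp) ->. Qed.

Lemma separation_witness : exists c, c \in C.
Proof. by have [wp [[c ->] _]] := sep; exists c; apply: icl_refl. Qed.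

Lemma separation_memC1 a : a \in C1 -> a \in C.
Proof. by have [<- _] := separation_partition; rewrite inE => ->. Qed.

Lemma separation_le_in a b :
  a \in C -> b \in C -> q a b = (a \in C1) || (b \in C2).
Proof. by have [_ [_ [_ [_ [_ [_ ->]]]]]] := sep => -> ->. Qed.

Lemma separation_le_out a b : ~~ ((a \in C) && (b \in C)) -> q a b = p a b.
Proof. by have [_ [_ [_ [_ [_ [_ ->]]]]]] := sep => /negbTE ->. Qed.

Lemma separation_leW a b : q a b -> p a b.
Proof.
have [[_ tr] [[c eC] _]] := sep.
case: (boolP ((a \in C) && (b \in C))) => [/andP[]|/separation_le_out -> //].
by rewrite eC !inE => /andP[_ pac] /andP[pcb _] _; apply: tr pac pcb.
Qed.

Lemma separation_weak_order : weak_order q.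
Proof.
have [[tot tr] [[c eC] _]] := sep; have [UC dis] := separation_partition.
have inC t : t \in C -> (t \in C1) || (t \in C2) by rewrite -UC inE.
split.
  move=> a b; case: (boolP ((a \in C) && (b \in C))) => [/andP[aC bC]|out].
    by rewrite !separation_le_in //; case/orP: (inC a aC) => ->; rewrite ?orbT.
  by rewrite !separation_le_out // andbC.
move=> b a d qab qbd.
case: (boolP ((a \in C) && (d \in C))) => [/andP[aC dC]|out]; last first.
  by rewrite separation_le_out //; apply: tr (separation_leW qab) (separation_leW qbd).
have bC : b \in C.
  move: aC dC; rewrite eC !inE => /andP[pca _] /andP[_ pdc].
  by rewrite (tr _ _ _ pca (separation_leW qab)) (tr _ _ _ (separation_leW qbd) pdc).
move: qab qbd; rewrite !separation_le_in //.
case/orP=> [-> //|b2]; case/orP=> [b1|-> //]; last by rewrite orbT.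
by have := disjointFr dis b1; rewrite b2.
Qed.

Lemma separation_upper_notC1 a : a \notin C1 -> [set j | q j a] = [set j | p j a].
Proof.
move=> aN1; have [[_ tr] [[c eC] _]] := sep; have [UC _] := separation_partition.
apply/setP => j; rewrite !inE.
case: (boolP ((j \in C) && (a \in C))) => [/andP[jC aC]|/separation_le_out //].
have a2 : a \in C2 by move: aC; rewrite -UC inE (negbTE aN1).
rewrite separation_le_in // a2 orbT; move: jC aC; rewrite eC !inE.
by move=> /andP[_ pjc] /andP[pca _]; rewrite (tr _ _ _ pjc pca).
Qed.

Lemma separation_upper_C1 a c : a \in C1 -> c \in C ->
  [set j | q j a] = [set j | strict p j c] :|: C1.
Proof.
move=> a1 cC; have [[_ tr] _] := sep; have [_ dis] := separation_partition.
have inC t : t \in C = p c t && p t c by rewrite (separation_class cC) inE.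
have [pca pac] : p c a /\ p a c by apply/andP; rewrite -inC separation_memC1.
apply/setP => j; rewrite !inE /strict.
case: (boolP (j \in C)) => [jC|jN].
  rewrite (separation_le_in jC (separation_memC1 a1)) (disjointFr dis a1) orbF.
  by move: jC; rewrite inC => /andP[-> _]; rewrite andbF.
rewrite separation_le_out ?(negbTE jN) //; have -> : j \in C1 = false.
  by apply: contraNF jN; apply: separation_memC1.
rewrite orbF; apply/idP/andP => [pja|[pjc _]]; last exact: tr pjc pca.
have pjc := tr _ _ _ pja pac; split => //.
by apply: contra jN => pcj; rewrite inC pcj.
Qed.

Lemma separation_above_disjoint c : c \in C -> [disjoint [set j | strict p j c] & C1].
Proof.
move=> cC; apply/pred0P => j /=; rewrite !inE /strict.
apply/negP => /andP[/andP[_ npcj] /separation_memC1]; apply/negP.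
by rewrite (separation_class cC) inE negb_and npcj.
Qed.

End Separation.

Section Mechanism.
Variables (M : finType) (R : realFieldType) (phi : rel M -> {ffun M -> R}).
Variables (p q : rel M) (C C1 C2 : {set M}).
Hypothesis sep : separation p q C C1 C2.

Lemma mass_above_eq c (S : {set M}) :
  sep_upper_invariant phi -> c \in C ->
  (forall s t, s \in S -> p t s -> t \in S) ->
  (forall s, s \in S -> strict p s c) ->
  mass (phi p) S = mass (phi q) S.
Proof.
move=> hup cC upS aboveS; have [wp _] := sep.
apply: (mass_eq_icl_closed wp) => s sS.
  by apply/subsetP => t; rewrite inE => /andP[_ /(upS s t sS)].
exact: hup sep s c cC (aboveS s sS).
Qed.

Lemma mass_below_eq c (S : {set M}) :
  sep_lower_invariant phi -> c \in C ->
  (forall s t, s \in S -> p s t -> t \in S) ->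
  (forall s, s \in S -> strict p c s) ->
  mass (phi p) S = mass (phi q) S.
Proof.
move=> hlow cC downS belowS; have [wp _] := sep.
apply: (mass_eq_icl_closed wp) => s sS.
  by apply/subsetP => t; rewrite inE => /andP[/(downS s t sS)].
exact: hlow sep s c cC (belowS s sS).
Qed.

Lemma mass_upper_eq a :
  (forall r : rel M, weak_order r -> is_lottery (phi r)) ->
  sep_upper_invariant phi -> sep_lower_invariant phi ->
  mass (phi p) [set j | p j a] = mass (phi q) [set j | p j a].
Proof.
move=> lot hup hlow; have [wp _] := sep; have [_ tr] := wp.
have [c cC] := separation_witness sep.
have [pac|pca] : strict p a c \/ p c a.
  by case: (boolP (p c a)) => [|/(weak_order_strictN wp)]; [right|left].
- apply: (mass_above_eq hup cC) => [s t|s]; rewrite !inE.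
    by move=> psa pts; apply: tr pts psa.
  by move=> psa; apply: weak_order_strict_trans pac.
- rewrite -[[set j | p j a]]setCK (mass_setC (phi p)) (mass_setC (phi q)).
  rewrite (lot p wp).2 (lot q (separation_weak_order sep)).2; congr (_ - _).
  apply: (mass_below_eq hlow cC) => [s t|s]; rewrite !inE => nsa.
    by move=> pst; apply: contra nsa; apply: tr pst.
  exact: (weak_order_strict_trans wp pca (weak_order_strictN wp nsa)).
Qed.

Lemma mass_strictly_above_eq c :
  sep_upper_invariant phi -> c \in C ->
  mass (phi p) [set j | strict p j c] = mass (phi q) [set j | strict p j c].
Proof.
move=> hup cC; have [wp _] := sep.
apply: (mass_above_eq hup cC) => [s t|s]; rewrite !inE // => psc pts.
exact: (weak_order_strict_trans wp pts psc).
Qed.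

End Mechanism.

Theorem lemma4 (M : finType) (R : realFieldType) (phi : rel M -> {ffun M -> R}) :
  (forall p : rel M, weak_order p -> is_lottery (phi p)) ->
  sep_monotonic phi -> sep_upper_invariant phi -> sep_lower_invariant phi ->
  sep_strategyproof phi.
Proof.
move=> lot [resp _] hup hlow p q C C1 C2 sep.
have massE := mass_upper_eq sep _ lot hup hlow.
split; apply/fosdE => a; first by rewrite massE.
case: (boolP (a \in C1)) => [a1|aN1]; last first.
  by rewrite (separation_upper_notC1 sep aN1) massE.
have [c cC] := separation_witness sep.
rewrite (separation_upper_C1 sep a1 cC).
rewrite !(mass_setU _ (separation_above_disjoint sep cC)).
rewrite (mass_strictly_above_eq sep hup cC) lerD2l.
by have [] := resp _ _ _ _ _ sep.
Qed.
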